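(* Let $G$ be a finite group and $p$ a fixed prime divisor of $|G|$. Then every self-centralizing subgroup of $G$ is a TI-subgroup of $G$ or subnormal in $G$ or has $p'$-order if and only if every subgroup of $G$ is a TI-subgroup of $G$ or subnormal in $G$ or has $p'$-order.
   Context: All groups are finite. A subgroup $H$ of a group $G$ is a TI-subgroup of $G$ if for every $g\in G$, $H^g\cap H=1$ or $H^g\cap H=H$. A subgroup $H$ of $G$ is self-centralizing in $G$ if $C_G(H)\leq H$. A subgroup has $p'$-order if its order is not divisible by $p$. *)

From mathcomp Require Import all_boot all_fingroup all_solvable.
Set Implicit Arguments. Unset Strict Implicit. Unset Printing Implicit Defensive.
Local Open Scope group_scope.

Definition TI_subgroup (gT : finGroupType) (H G : {group gT}) : Prop :=
  forall g, g \in G -> (H :^ g :&: H = 1) \/ (H :^ g :&: H = H).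

Definition self_centralizing (gT : finGroupType) (H G : {group gT}) : Prop :=
  'C_G(H) \subset H.

Definition TI_sn_p' (gT : finGroupType) (p : nat) (H G : {group gT}) : Prop :=
  TI_subgroup H G \/ H <|<| G \/ ~~ (p %| #|H|).

From mathcomp Require Import all_boot all_fingroup all_solvable.
From mathcomp Require Import zmodp mxrepresentation mxabelem vcharacter.
Set Implicit Arguments. Unset Strict Implicit. Unset Printing Implicit Defensive.
Local Open Scope group_scope.

(* Let H be a non-subnormal subgroup of G with p dividing #|H|, and C := 'C_G(H).
   Self-centralizing overgroups of H are then TI, so any such overgroup L that
   normalizes H is fixed by every g with H^g :&: H != 1.  Applying this to L = H X
   for the maximal abelian subgroups X of C traps H^g in H 'Z(C).  A maximal
   non-subnormal overgroup M of H C is TI and self-normalizing, hence a Frobenius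
   complement, so its abelian subgroups are cyclic; comparing H and H^g inside the
   cyclic groups <[h]> 'Z(C), h in H, gives H^g = H. *)

Section GroupFacts.

Variable gT : finGroupType.
Implicit Types (A B C G L M N X Y Z : {group gT}).

Lemma sub_conjG_id L g : L \subset L :^ g -> L :^ g = L.
Proof. by move=> sLLg; apply/eqP; rewrite eq_sym eqEcard sLLg cardJg /=. Qed.

Lemma TI_subgroup_conj_id G L g :
  TI_subgroup L G -> g \in G -> L :^ g :&: L != 1 -> L :^ g = L.
Proof.
move=> tiL Gg ntLgL; have [tiLg | /setIidPr sLLg] := tiL g Gg.
  by rewrite tiLg eqxx in ntLgL.
exact: sub_conjG_id.
Qed.

Lemma cyclic_setI_eq Y A B :
  cyclic Y -> Y * A = Y * B -> #|A| = #|B| -> Y :&: A = Y :&: B.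
Proof.
move=> cycY eYAB eAB; apply/eqP; rewrite (eq_subG_cyclic cycY) ?subsetIl //.
have YB_gt0 : 0 < #|Y * B| by apply/card_gt0P; exists 1; rewrite -[1]mulg1 mem_mulg.
by rewrite -(eqn_pmul2l YB_gt0) -mul_cardG -eYAB -mul_cardG eAB.
Qed.

Lemma mulg_joing_id Y A Z :
  Z \subset 'C(A) -> Z \subset Y -> Y \subset A <*> Z -> Y * A = A <*> Z.
Proof.
move=> cZA sZY sYAZ; apply/eqP; rewrite eqEsubset mul_subG ?joing_subl //=.
by rewrite joingC cent_joinEl // mulSg.
Qed.

Lemma abelian_semiregular_cyclic N Y :
  N :!=: 1 -> Y \subset 'N(N) -> coprime #|N| #|Y| -> semiregular N Y ->
  abelian Y -> cyclic Y.
Proof.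
move=> ntN nNY coNY regNY abY.
have [Q sylQ nQY] :=
  sol_coprime_Sylow_exists (pdiv #|N|) (abelian_sol abY) nNY coNY.
have ntQ : Q :!=: 1.
  by rewrite -cardG_gt1 (card_Hall sylQ) p_part_gt1 pi_pdiv cardG_gt1.
have [W minW sWQ] := minnormal_exists ntQ nQY.
have [nWY ntW /is_abelemP[r _ abW]] :=
  minnormal_solvable minW sWQ (pgroup_sol (pHall_pgroup sylQ)).
have faithfulY : 'C_Y(W) = 1.
  have [w Ww ntw] := trivgPn _ ntW.
  have N1w : w \in N^# by rewrite !inE ntw (subsetP (pHall_sub sylQ)) ?(subsetP sWQ).
  apply/trivgP; rewrite -(semiregular_sym regNY N1w).
  by rewrite setIS // -cent_set1 centS // sub1set.
pose rG := abelem_repr abW ntW nWY.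
apply: (@mx_faithful_irr_abelian_cyclic _ _ _ _ rG) => //.
- exact: abelem_mx_faithful.
- exact/abelem_mx_irrP.
Qed.

Lemma Frobenius_compl_abelian_cyclic G M Y :
  [Frobenius G with complement M] -> Y \subset M -> abelian Y -> cyclic Y.
Proof.
move=> frobG sYM; have [N frobN] := Frobenius_kernel_exists frobG.
have [defG ntN _ _ _] := Frobenius_context frobN.
have [_ _ _ nNM _] := sdprod_context defG.
apply: abelian_semiregular_cyclic ntN (subset_trans sYM nNM) _ _.
- exact: coprimegS sYM (Frobenius_coprime frobN).
- exact: semiregularS (subxx N) sYM (Frobenius_reg_ker frobN).
Qed.

Lemma TI_self_normalizing_Frobenius G M :
  M :!=: 1 -> M \proper G -> TI_subgroup M G -> 'N_G(M) = M ->
  [Frobenius G with complement M].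
Proof.
move=> ntM; rewrite properEneq => /andP[neMG sMG] tiM nMG.
apply/andP; split=> //; apply/normedTI_P; split.
- by rewrite setD_eq0 subG1.
- by rewrite normD1 subsetI sMG normG.
move=> g Gg /pred0Pn[x /andP[/= /setD1P[ntx Mx]]].
rewrite conjD1g => /setD1P[_ Mgx].
rewrite -nMG inE Gg; apply/normP; apply: TI_subgroup_conj_id tiM Gg _.
by apply/trivgPn; exists x; rewrite // inE Mgx.
Qed.

Lemma max_abelian_exists C x : x \in C ->
  exists2 X : {group gT}, [max X | abelian X & X \subset C] & x \in X.
Proof.
move=> Cx; have [|X maxX] :=
  @maxgroup_exists _ (fun X => abelian X && (X \subset C)) <[x]>%G.
  by rewrite cycle_abelian cycle_subG.
by rewrite cycle_subG; exists X.
Qed.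

Lemma max_abelian_cent C X :
  [max X | abelian X & X \subset C] -> 'C_C(X) \subset X.
Proof.
case/maxgroupP=> /andP[abX sXC] maxX; apply/subsetP=> y /setIP[Cy cXy].
have <- : X <*> <[y]> = X.
  apply: (maxX (X <*> <[y]>)%G); last exact: joing_subl.
  by rewrite abelianY abX cycle_abelian cycle_subG cXy join_subG sXC cycle_subG.
by rewrite mem_gen // inE cycle_id orbT.
Qed.

End GroupFacts.

Section NonSubnormalSubgroup.

Variables (gT : finGroupType) (G H : {group gT}) (p : nat).
Hypothesis p_pr : prime p.
Hypothesis selfcent_TI_sn_p' : forall L : {group gT},
  L \subset G -> self_centralizing L G -> TI_sn_p' p L G.
Hypotheses (sHG : H \subset G) (p_dvd_H : p %| #|H|) (not_snH : ~~ (H <|<| G)).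

Implicit Type L : {group gT}.

Let C := 'C_G(H)%G.

Lemma normalizing_overgroup_not_subnormal L :
  H \subset L -> L \subset 'N(H) -> ~~ (L <|<| G).
Proof.
move=> sHL nHL; apply: contra not_snH => snL; apply: subnormal_trans snL.
by apply: normal_subnormal; rewrite /normal sHL.
Qed.

Lemma selfcent_overgroup_TI L : H \subset L -> L \subset G ->
  self_centralizing L G -> ~~ (L <|<| G) -> TI_subgroup L G.
Proof.
move=> sHL sLG scL not_snL; have [// | [snL | p'L]] := selfcent_TI_sn_p' sLG scL.
  by rewrite snL in not_snL.
by rewrite (dvdn_trans p_dvd_H (cardSg sHL)) in p'L.
Qed.

Lemma selfcent_normalizing_conj_id L g :
  H \subset L -> L \subset G -> L \subset 'N(H) -> self_centralizing L G ->
  g \in G -> H :^ g :&: H != 1 -> L :^ g = L.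
Proof.
move=> sHL sLG nHL scL Gg ntHgH.
have not_snL := normalizing_overgroup_not_subnormal sHL nHL.
apply: TI_subgroup_conj_id (selfcent_overgroup_TI sHL sLG scL not_snL) Gg _.
apply: contra ntHgH; rewrite -!subG1; apply: subset_trans.
by rewrite setISS ?conjSg.
Qed.

Lemma selfcent_of_cent_sub L : H \subset L -> C \subset L -> self_centralizing L G.
Proof. by move=> sHL; apply: subset_trans; rewrite setIS ?centS. Qed.

Lemma Frobenius_compl_over_cent :
  exists2 M : {group gT}, H <*> C \subset M & [Frobenius G with complement M].
Proof.
pose P (L : {group gT}) := [&& H <*> C \subset L, L \subset G & ~~ (L <|<| G)].
have PK : P (H <*> C)%G.
  rewrite /P subxx join_subG sHG subsetIl /=.
  apply: normalizing_overgroup_not_subnormal (joing_subl _ _) _.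
  by rewrite join_subG normG cents_norm // subsetIr.
have [M maxM sKM] := maxgroup_exists PK.
have [/and3P[_ sMG not_snM] maxMP] := maxgroupP maxM.
have [sHM sCM] := joing_subP sKM.
exists M => //; apply: TI_self_normalizing_Frobenius.
- apply: subG1_contra sHM _; apply: contraTneq p_dvd_H => ->.
  by rewrite cards1 dvdn1 (gtn_eqF (prime_gt1 p_pr)).
- rewrite properEneq sMG andbT; apply: contraNneq not_snM => ->.
  exact: subnormal_refl.
- exact: selfcent_overgroup_TI sHM sMG (selfcent_of_cent_sub sHM sCM) not_snM.
- apply: maxMP; last by rewrite subsetI sMG normG.
  rewrite /P subsetIl (subset_trans sKM) ?subsetI ?sMG ?normG //=.
  apply: contra not_snM => snN; apply: subnormal_trans snN.
  exact: normal_subnormal (normalSG sMG).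
Qed.

Section MaxAbelian.

Variable X : {group gT}.
Hypothesis maxX : [max X | abelian X & X \subset C].

Let sXC : X \subset C. Proof. by have [/andP[]] := maxgroupP maxX. Qed.

Lemma joing_max_abelian_selfcent : self_centralizing (H <*> X) G.
Proof.
rewrite /self_centralizing centY setIA.
exact: subset_trans (max_abelian_cent maxX) (joing_subr _ _).
Qed.

Lemma conj_sub_joing_max_abelian g :
  g \in G -> H :^ g :&: H != 1 -> H :^ g \subset H <*> X.
Proof.
move=> Gg ntHgH.
have sHXG : H <*> X \subset G by rewrite join_subG sHG (subset_trans sXC) ?subsetIl.
have nHX : H <*> X \subset 'N(H).
  by rewrite join_subG normG cents_norm // (subset_trans sXC) ?subsetIr.
have HXg := selfcent_normalizing_conj_id (joing_subl H X) sHXG nHX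
  joing_max_abelian_selfcent Gg ntHgH.
by rewrite -HXg conjSg joing_subl.
Qed.

Lemma joing_max_abelian_meet_cent : (H <*> X) :&: C \subset X.
Proof.
have cHX : X \subset 'C(H) by rewrite (subset_trans sXC) ?subsetIr.
rewrite cent_joinEr //; apply/subsetP=> _ /setIP[/mulsgP[h x Hh Xx ->] Chx].
have Ch : h \in C by rewrite -(groupMr h (subsetP sXC x Xx)).
have Xh : h \in X.
  apply: (subsetP (max_abelian_cent maxX)).
  by rewrite inE Ch (subsetP _ h Hh) // centsC.
by rewrite groupM.
Qed.

End MaxAbelian.

Lemma conj_sub_joing_center g :
  g \in G -> H :^ g :&: H != 1 -> H :^ g \subset H <*> 'Z(C).
Proof.
move=> Gg ntHgH; apply/subsetP=> k Hgk.
have cHC : C \subset 'C(H) by apply: subsetIr.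
have sHCG : H <*> C \subset G by rewrite join_subG sHG subsetIl.
have nHC : H <*> C \subset 'N(H) by rewrite join_subG normG cents_norm.
have HCg := selfcent_normalizing_conj_id (joing_subl H C) sHCG nHC
  (selfcent_of_cent_sub (joing_subl H C) (joing_subr H C)) Gg ntHgH.
have sHgHC : H :^ g \subset H <*> C by rewrite -HCg conjSg joing_subl.
have cZH : 'Z(C) \subset 'C(H) := subset_trans (center_sub C) cHC.
have := subsetP sHgHC k Hgk; rewrite !cent_joinEr // => /mulsgP[h y Hh Cy def_k].
rewrite def_k mem_mulg // inE Cy; apply/centP=> c Cc.
have [X maxX Xc] := max_abelian_exists Cc.
have [/andP[abX _] _] := maxgroupP maxX.
have Xy : y \in X.
  apply: (subsetP (joing_max_abelian_meet_cent maxX)); rewrite inE Cy andbT.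
  rewrite -(mulKg h y) groupM //.
    by rewrite groupV (subsetP (joing_subl H X)).
  by rewrite -def_k (subsetP (conj_sub_joing_max_abelian maxX Gg ntHgH)).
exact: (centP (subsetP abX y Xy)) c Xc.
Qed.

Lemma cent_conj_id g : g \in G -> H :^ g \subset H <*> 'Z(C) -> C :^ g = C.
Proof.
move=> Gg sHgHZ; apply: sub_conjG_id.
rewrite /= conjIg -centJ (conjGid Gg) subsetI subsetIl centsC.
apply: subset_trans sHgHZ _; rewrite join_subG subsetIr andbT.
by rewrite centsC subsetIr.
Qed.

Lemma joing_center_conj_eq g : g \in G -> H :^ g :&: H != 1 ->
  'Z(C) :^ g = 'Z(C) /\ H :^ g <*> 'Z(C) = H <*> 'Z(C).
Proof.
move=> Gg ntHgH; have sHgHZ := conj_sub_joing_center Gg ntHgH.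
have ZgZ : 'Z(C) :^ g = 'Z(C).
  by rewrite /center conjIg -centJ (cent_conj_id Gg sHgHZ).
have ntHg'H : H :^ g^-1 :&: H != 1.
  by rewrite -(conjsg_eq1 _ g) conjIg conjsgKV setIC.
have sHHgZ : H \subset H :^ g <*> 'Z(C).
  by move: (conj_sub_joing_center (groupVr Gg) ntHg'H); rewrite sub_conjgV conjYg ZgZ.
split=> //; apply/eqP; rewrite eqEsubset !join_subG sHgHZ sHHgZ.
by rewrite !joing_subr.
Qed.

Lemma not_subnormal_TI : TI_subgroup H G.
Proof.
move=> g Gg; have [-> | ntHgH] := eqVneq (H :^ g :&: H) 1; [by left | right].
have [M sHCM frobM] := Frobenius_compl_over_cent.
have [sHM sCM] := joing_subP sHCM.
have [ZgZ eHgZ] := joing_center_conj_eq Gg ntHgH.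
have cZH : 'Z(C) \subset 'C(H) := subset_trans (center_sub C) (subsetIr _ _).
have cZHg : 'Z(C) \subset 'C(H :^ g) by rewrite centJ -ZgZ conjSg.
apply/setIidPr/subsetP=> h Hh.
pose Y := (<[h]> <*> 'Z(C))%G.
have sYHZ : Y \subset H <*> 'Z(C).
  by rewrite join_subG cycle_subG (subsetP (joing_subl _ _)) // joing_subr.
have cycY : cyclic Y.
  apply: Frobenius_compl_abelian_cyclic frobM _ _.
    by rewrite join_subG cycle_subG (subsetP sHM) // (subset_trans (center_sub C)).
  rewrite abelianY cycle_abelian center_abelian centsC cycle_subG.
  by rewrite (subsetP _ h Hh) // centsC.
have eYH : Y * H = Y * (H :^ g)%G.
  rewrite (mulg_joing_id cZH (joing_subr _ _) sYHZ) -eHgZ.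
  by rewrite (mulg_joing_id cZHg (joing_subr _ _)) // eHgZ.
have : h \in Y :&: (H :^ g)%G.
  by rewrite -(cyclic_setI_eq cycY eYH) ?cardJg // inE Hh mem_gen // inE cycle_id.
by case/setIP.
Qed.

End NonSubnormalSubgroup.

Theorem theorem1p5 (gT : finGroupType) (G : {group gT}) (p : nat) :
  prime p -> p %| #|G| ->
  (forall H : {group gT}, H \subset G -> self_centralizing H G -> TI_sn_p' p H G) <->
  (forall H : {group gT}, H \subset G -> TI_sn_p' p H G).
Proof.
move=> p_pr _; split=> [selfcent_TI_sn_p' H sHG | all_TI_sn_p' H sHG _].
- have [p_dvd_H | p'H] := boolP (p %| #|H|); last by right; right.
  have [snH | not_snH] := boolP (H <|<| G); first by right; left.
  by left; apply: not_subnormal_TI p_pr selfcent_TI_sn_p' sHG p_dvd_H not_snH.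
- exact: all_TI_sn_p'.
Qed.
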